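(* Let $k:\mathbb R\to[0,\infty)$ be continuous with $\int_{\mathbb R}k(x)\,dx=1$, satisfying (K1) there is $\lambda>0$ with $\int_{\mathbb R}k(x)e^{\lambda|x|}dx<+\infty$, and (K2) $k(x_1)>0$, $k(x_2)>0$ for some $x_1>0$, $x_2<0$. Let $f\in C^1([0,1])$ satisfy $f(0)=f(1)=0$, $f(u)>0$ for $u\in(0,1)$, $f'(0)>0$ and $f(u)\leqslant f'(0)u$ for $u\in(0,1)$. Let $u_0\in C(\mathbb R)$ with $0\leqslant u_0\leqslant 1$, and let $u(t,x)$ be the solution of \[ u_t(t,x)=\int_{\mathbb R}k(x-y)u(t,y)\,dy-u(t,x)+f(u(t,x)),\ t>0,\ x\in\mathbb R,\qquad u(0,x)=u_0(x). \] If, for some $x_1\in\mathbb R$, both $k(\cdot)$ and $u_0(\cdot+x_1)$ are symmetric (even) and decreasing on $\mathbb R^+$, then for every $t>0$ the function $u(t,\cdot+x_1)$ is symmetric and decreasing on $\mathbb R^+$.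
   Context: ''Decreasing on $\mathbb R^+$'' for a function $g$ means $g(x)\geqslant g(y)$ whenever $0\leqslant x\leqslant y$. *)

From Stdlib Require Import Reals.
From Coquelicot Require Import Coquelicot.
Open Scope R_scope.

Definition even_fun (g : R -> R) : Prop := forall x, g (- x) = g x.

Definition decr_Rplus (g : R -> R) : Prop :=
  forall x y, 0 <= x -> x <= y -> g y <= g x.

Definition is_int_R (g : R -> R) (l : R) : Prop :=
  is_RInt_gen g (Rbar_locally m_infty) (Rbar_locally p_infty) l.

Definition I01 (x : R) : Prop := 0 <= x <= 1.

Definition is_derive_01 (f df : R -> R) : Prop :=
  forall x, I01 x ->
    filterlim (fun y => (f y - f x) / (y - x))
      (within (fun y => I01 y /\ y <> x) (locally x)) (locally (df x)).

Definition C1_01 (f df : R -> R) : Prop :=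
  is_derive_01 f df /\ continuous_on I01 df.

(** u (with u t x = u(t,x)) is a solution of the nonlocal equation
    u_t = k * u - u + f(u) with initial datum u0, taking values in [0,1]
    (the domain of f). *)
Definition is_solution (k f u0 : R -> R) (u : R -> R -> R) : Prop :=
  (forall t x, 0 <= t -> I01 (u t x)) /\
  (forall x, u 0 x = u0 x) /\
  (forall x, filterlim (fun s => u s x) (at_right 0) (locally (u 0 x))) /\
  (forall t x, 0 < t ->
     exists I : R,
       is_int_R (fun y => k (x - y) * u t y) I /\
       is_derive (fun s => u s x) t (I - u t x + f (u t x))).

(* For a point c and a half-line D bounded by c, put
   w(t, x) = u(t, x) - u(t, 2c - x).  As k is even and decreasing,
   k (x - y) >= k (2c - x - y) for x, y on the same side of c; pairing y with
   2c - y in the convolution then shows that the nonlocal term in the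
   equation for w is at least -N, where -N is the minimum of w on D, and f is
   Lipschitz with some constant K.  So where w < 0 its time derivative is at
   least -(1 + K) N, and on a time window of length 1 / (2 (1 + K)) we get
   w >= -N/2, i.e. N = 0.  Iterating over windows, w(0, .) >= 0 on D implies
   w >= 0 on D for all times.  Reflecting about x1 from both sides gives the
   symmetry; reflecting about x1 + (p + q) / 2 compares u at p + x1 and q + x1. *)

From Stdlib Require Import Reals Lra Classical.
From Coquelicot Require Import Coquelicot.
Open Scope R_scope.

Lemma filter_prod_reflect (c : R) (P : R * R -> Prop) :
  filter_prod (Rbar_locally m_infty) (Rbar_locally p_infty) P ->
  filter_prod (Rbar_locally m_infty) (Rbar_locally p_infty)
    (fun ab => P (c - snd ab, c - fst ab)).
Proof.
  intros [Q Q' [M1 HM1] [M2 HM2] HP].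
  apply (Filter_prod _ _ _ (fun a => Q' (c - a)) (fun b => Q (c - b))).
  - exists (c - M2). intros x Hx. apply HM2. lra.
  - exists (c - M1). intros x Hx. apply HM1. lra.
  - intros x y Hx Hy. now apply HP.
Qed.

Lemma is_int_R_reflect (g : R -> R) (c l : R) :
  is_int_R g l -> is_int_R (fun y => g (c - y)) l.
Proof.
  intros Hg P HP. specialize (Hg P HP). unfold filtermapi in *.
  apply (filter_prod_reflect c) in Hg. simpl in Hg.
  eapply filter_imp; [|exact Hg].
  intros [a b] [y [Hy Py]]. exists y. split; [|exact Py]. simpl in *.
  apply is_RInt_swap in Hy.
  replace (c - a) with (-1 * a + c) in Hy by ring.
  replace (c - b) with (-1 * b + c) in Hy by ring.
  apply is_RInt_comp_lin, (is_RInt_scal _ _ _ (-1)) in Hy.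
  replace y with (scal (-1) (opp y)).
  - eapply is_RInt_ext; [|exact Hy]. intros x _.
    cbv [scal]; simpl; cbv [mult]; simpl. replace (-1 * x + c) with (c - x); ring.
  - cbv [scal opp]; simpl; cbv [mult opp]; simpl. ring.
Qed.

Lemma is_int_R_ge0 (g : R -> R) (l : R) :
  (forall y, 0 <= g y) -> is_int_R g l -> 0 <= l.
Proof.
  intros g_ge0 Hl.
  assert (Habs : Rabs l <= l).
  { apply (@RInt_gen_norm R_CompleteNormedModule _ _ (Rbar_locally_filter m_infty)
             (Rbar_locally_filter p_infty) g g l l); auto.
    - apply (Filter_prod _ _ _ (fun a => a < 0) (fun b => 0 < b)).
      + now exists 0.
      + now exists 0.
      + intros a b Ha Hb. simpl. lra.
    - apply (Filter_prod _ _ _ (fun _ => True) (fun _ => True)).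
      + now exists 0.
      + now exists 0.
      + intros _ _ _ _ y _. apply Req_le, (Rabs_pos_eq (g y)), g_ge0. }
  pose proof (Rabs_pos l). lra.
Qed.

(* Pairing y with 2c - y and using that k is even, the integrand of
   2 (I1 - I2) becomes (k (x - y) - k (2c - x - y)) (v y - v (2c - y)). *)
Lemma convolution_reflection_gap (k v : R -> R) (c x M I1 I2 : R) :
  even_fun k -> is_int_R k 1 ->
  is_int_R (fun y => k (x - y) * v y) I1 ->
  is_int_R (fun y => k ((2*c - x) - y) * v y) I2 ->
  (forall y, -(k (x - y) + k ((2*c - x) - y)) * M <=
             (k (x - y) - k ((2*c - x) - y)) * (v y - v (2*c - y))) ->
  -M <= I1 - I2.
Proof.
  intros k_even k_int H1 H2 Hpt.
  set (G := fun y => k (x - y) * v y - k ((2*c - x) - y) * v y).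
  assert (HG : is_int_R G (I1 - I2)) by exact (is_RInt_gen_minus _ _ _ _ H1 H2).
  assert (Hk : is_int_R (fun y => k (x - y) + k ((2*c - x) - y)) (1 + 1)).
  { exact (is_RInt_gen_plus _ _ _ _ (is_int_R_reflect k x 1 k_int)
                                    (is_int_R_reflect k (2*c - x) 1 k_int)). }
  assert (Hsum := is_RInt_gen_plus _ _ _ _
                    (is_RInt_gen_plus _ _ _ _ HG (is_int_R_reflect G (2*c) _ HG))
                    (is_RInt_gen_scal _ M _ Hk)).
  apply is_int_R_ge0 in Hsum.
  - cbv [plus scal] in Hsum; simpl in Hsum; cbv [mult] in Hsum; simpl in Hsum. lra.
  - intros y. unfold G. cbv [plus scal]; simpl; cbv [mult]; simpl.
    replace (x - (2*c - y)) with (-((2*c - x) - y)) by ring.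
    replace ((2*c - x) - (2*c - y)) with (-(x - y)) by ring.
    rewrite !k_even. specialize (Hpt y). nra.
Qed.

Lemma real_induction (a b : R) (P : R -> Prop) :
  a <= b -> P a ->
  (forall S, a < S <= b ->
     (forall d, 0 < d -> exists e, S - d < e < S /\ a <= e /\ P e) -> P S) ->
  (forall S, a <= S < b -> P S -> exists y, S < y <= b /\ P y) ->
  P b.
Proof.
  intros Hab Pa Hleft Hright.
  set (E := fun s => a <= s <= b /\ P s).
  assert (Hbound : bound E) by (exists b; intros s [Hs _]; lra).
  destruct (completeness E Hbound (ex_intro _ a (conj (conj (Rle_refl a) Hab) Pa)))
    as [S [S_ub S_lub]].
  assert (aS : a <= S) by (apply S_ub; split; [lra|auto]).
  assert (Sb : S <= b) by (apply S_lub; intros s [Hs _]; lra).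
  assert (PS : P S).
  { destruct (classic (P S)) as [|nPS]; [assumption|].
    destruct (Req_dec S a) as [-> | Sa]; [exact Pa|].
    apply Hleft; [lra|]. intros d Hd.
    apply NNPP; intro Hno.
    assert (S <= S - d); [|lra].
    apply S_lub. intros s [Hs Ps]. apply Rnot_lt_le; intro Hlt.
    assert (s <= S) by (apply S_ub; split; auto).
    destruct (Req_dec s S) as [-> | sS]; [contradiction|].
    apply Hno. exists s. repeat split; auto; lra. }
  destruct (Rle_lt_or_eq_dec S b Sb) as [Slt|<-]; [|exact PS].
  destruct (Hright S (conj aS Slt) PS) as [y [Hy Py]].
  assert (y <= S) by (apply S_ub; split; [lra|auto]). lra.
Qed.

Lemma lipschitz_I01_of_locally_lipschitz (g : R -> R) (L : R) :
  (forall s, I01 s -> exists d, 0 < d /\ forall y, I01 y -> Rabs (y - s) < d ->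
     Rabs (g y - g s) <= L * Rabs (y - s)) ->
  forall a b, I01 a -> I01 b -> Rabs (g b - g a) <= L * Rabs (b - a).
Proof.
  intros Hloc.
  assert (Hle : forall a b, I01 a -> I01 b -> a <= b -> Rabs (g b - g a) <= L * (b - a)).
  { intros a b Ia Ib Hab.
    apply (real_induction a b (fun s => Rabs (g s - g a) <= L * (s - a))); auto.
    - unfold Rminus. rewrite Rplus_opp_r, Rabs_R0. lra.
    - intros S HS Hbefore.
      destruct (Hloc S ltac:(unfold I01 in *; lra)) as [d [Hd HS_lip]].
      destruct (Hbefore d Hd) as [e [He [ae He_a]]].
      specialize (HS_lip e ltac:(unfold I01 in *; lra) ltac:(rewrite Rabs_left; lra)).
      rewrite (Rabs_left (e - S)), Rabs_minus_sym in HS_lip by lra.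
      replace (g S - g a) with ((g S - g e) + (g e - g a)) by ring.
      eapply Rle_trans; [apply Rabs_triang|]. lra.
    - intros S HS HS_a.
      destruct (Hloc S ltac:(unfold I01 in *; lra)) as [d [Hd HS_lip]].
      set (y := Rmin (S + d / 2) b).
      assert (Hy : S < y <= S + d / 2 /\ y <= b) by (unfold y, Rmin; destruct Rle_dec; lra).
      exists y. split; [lra|].
      specialize (HS_lip y ltac:(unfold I01 in *; lra) ltac:(rewrite Rabs_right; lra)).
      rewrite (Rabs_right (y - S)) in HS_lip by lra.
      replace (g y - g a) with ((g y - g S) + (g S - g a)) by ring.
      eapply Rle_trans; [apply Rabs_triang|]. lra. }
  intros a b Ia Ib. destruct (Rle_dec a b).
  - rewrite (Rabs_right (b - a)) by lra. auto.
  - rewrite Rabs_minus_sym, (Rabs_minus_sym b), (Rabs_right (a - b)) by lra.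
    apply Hle; auto; lra.
Qed.

Definition clamp01 (x : R) : R := Rmax 0 (Rmin 1 x).

Lemma clamp01_I01 (x : R) : I01 (clamp01 x).
Proof. unfold clamp01, I01, Rmax, Rmin. repeat destruct Rle_dec; lra. Qed.

Lemma clamp01_id (x : R) : I01 x -> clamp01 x = x.
Proof. unfold clamp01, I01, Rmax, Rmin. repeat destruct Rle_dec; lra. Qed.

Lemma clamp01_contract (x y : R) : Rabs (clamp01 y - clamp01 x) <= Rabs (y - x).
Proof.
  unfold clamp01, Rmax, Rmin. repeat destruct Rle_dec; unfold Rabs;
  repeat destruct Rcase_abs; lra.
Qed.

(* Extending g by clamping makes it continuous on all of R, so the extreme
   value theorem of the standard library applies on [0, 1]. *)
Lemma continuous_on_I01_bounded (g : R -> R) :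
  continuous_on I01 g -> exists L, forall x, I01 x -> Rabs (g x) <= L.
Proof.
  intros g_cont.
  assert (Hcont : forall c, continuity_pt (fun x => g (clamp01 x)) c).
  { intros c. apply continuity_pt_filterlim.
    eapply filterlim_comp; [|apply (g_cont (clamp01 c) (clamp01_I01 c))].
    intros P [eps Heps]. exists eps. intros y Hy. apply Heps; [|apply clamp01_I01].
    change (Rabs (clamp01 y - clamp01 c) < eps).
    eapply Rle_lt_trans; [apply clamp01_contract|exact Hy]. }
  destruct (continuity_ab_maj _ 0 1 ltac:(lra) (fun c _ => Hcont c)) as [xmax [Hmax _]].
  destruct (continuity_ab_min _ 0 1 ltac:(lra) (fun c _ => Hcont c)) as [xmin [Hmin _]].
  exists (Rabs (g (clamp01 xmax)) + Rabs (g (clamp01 xmin))).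
  intros x Ix. specialize (Hmax x Ix). specialize (Hmin x Ix). simpl in *.
  rewrite (clamp01_id x Ix) in Hmax, Hmin.
  revert Hmax Hmin. unfold Rabs. repeat destruct Rcase_abs; lra.
Qed.

Lemma is_derive_01_locally_lipschitz (f df : R -> R) (L : R) :
  is_derive_01 f df -> (forall x, I01 x -> Rabs (df x) <= L) ->
  forall s, I01 s -> exists d, 0 < d /\ forall y, I01 y -> Rabs (y - s) < d ->
     Rabs (f y - f s) <= (L + 1) * Rabs (y - s).
Proof.
  intros f_der df_bound s Is.
  destruct (f_der s Is (ball (df s) (mkposreal 1 Rlt_0_1)) (locally_ball _ _))
    as [d Hd].
  exists d. split; [apply cond_pos|]. intros y Iy Hys.
  destruct (Req_dec y s) as [-> | ys].
  - unfold Rminus. rewrite !Rplus_opp_r, Rabs_R0. lra.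
  - specialize (Hd y Hys (conj Iy ys)).
    change (Rabs ((f y - f s) / (y - s) - df s) < 1) in Hd.
    specialize (df_bound s Is).
    replace (f y - f s) with ((f y - f s) / (y - s) * (y - s)) by (field; lra).
    rewrite Rabs_mult. apply Rmult_le_compat_r; [apply Rabs_pos|].
    revert Hd df_bound. unfold Rabs. repeat destruct Rcase_abs; lra.
Qed.

Lemma C1_01_lipschitz (f df : R -> R) :
  C1_01 f df -> exists K, 0 <= K /\
    forall a b, I01 a -> I01 b -> Rabs (f b - f a) <= K * Rabs (b - a).
Proof.
  intros [f_der df_cont].
  destruct (continuous_on_I01_bounded df df_cont) as [L HL].
  assert (L_ge0 : 0 <= L) by (apply Rle_trans with (Rabs (df 0));
                              [apply Rabs_pos | apply HL; unfold I01; lra]).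
  exists (L + 1). split; [lra|].
  exact (lipschitz_I01_of_locally_lipschitz f (L + 1) (is_derive_01_locally_lipschitz f df L f_der HL)).
Qed.

Lemma is_derive_slope_ge (g : R -> R) (S d eps : R) :
  is_derive g S d -> 0 < eps -> exists del, 0 < del /\
   (forall y, S < y < S + del -> (d - eps) * (y - S) <= g y - g S) /\
   (forall y, S - del < y < S -> (d - eps) * (S - y) <= g S - g y).
Proof.
  intros g_der Heps. apply is_derive_Reals in g_der.
  destruct (g_der eps Heps) as [del Hdel].
  assert (Hslope : forall y, y <> S -> Rabs (y - S) < del ->
            d - eps <= (g y - g S) / (y - S)).
  { intros y yS Hy. specialize (Hdel (y - S) ltac:(lra) Hy).
    replace (S + (y - S)) with y in Hdel by ring.
    revert Hdel. unfold Rabs. destruct Rcase_abs; lra. }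
  exists del. split; [apply cond_pos|split]; intros y Hy.
  - specialize (Hslope y ltac:(lra) ltac:(rewrite Rabs_right; lra)).
    replace (g y - g S) with ((g y - g S) / (y - S) * (y - S)) by (field; lra).
    apply Rmult_le_compat_r; lra.
  - specialize (Hslope y ltac:(lra) ltac:(rewrite Rabs_left; lra)).
    replace (g S - g y) with ((g y - g S) / (y - S) * (S - y)) by (field; lra).
    apply Rmult_le_compat_r; lra.
Qed.

(* Real induction on the weakened bound -(K + eps) (s - tau) - eps <= g s,
   with eps chosen so that it contradicts g t < -K (t - tau). *)
Lemma linear_lower_bound_where_negative (g : R -> R) (tau t K : R) :
  tau <= t -> 0 <= K -> 0 <= g tau ->
  (forall S, tau <= S < t ->
     filterlim g (within (fun y => tau <= y) (locally S)) (locally (g S))) ->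
  (forall S, tau < S <= t -> g S < 0 -> exists d, is_derive g S d /\ -K <= d) ->
  -K * (t - tau) <= g t.
Proof.
  intros Ht K_ge0 g_tau g_cont g_der.
  apply Rnot_lt_le; intro Hlt.
  set (eps := (-K * (t - tau) - g t) / (t - tau + 2)).
  assert (Heps : 0 < eps) by (unfold eps; apply Rdiv_lt_0_compat; lra).
  assert (Heps_def : eps * (t - tau + 2) = -K * (t - tau) - g t)
    by (unfold eps; field; lra).
  enough (-(K + eps) * (t - tau) - eps <= g t) by nra.
  apply (real_induction tau t (fun s => -(K + eps) * (s - tau) - eps <= g s));
    [lra | replace (tau - tau) with 0 by ring; lra | |].
  - intros S HS Hbefore.
    destruct (Rlt_or_le (g S) 0) as [neg|pos]; [|nra].
    destruct (g_der S HS neg) as [d [Hd dK]].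
    destruct (is_derive_slope_ge g S d eps Hd Heps) as [del [Hdel [_ Hleft]]].
    destruct (Hbefore del Hdel) as [e [He [tau_e Pe]]].
    specialize (Hleft e ltac:(lra)).
    assert ((d - eps) * (S - e) >= (-K - eps) * (S - e)) by nra. nra.
  - intros S HS PS.
    destruct (Rlt_or_le (g S) 0) as [neg|pos].
    + destruct (g_der S ltac:(destruct (Req_dec S tau); [subst; lra|lra]) neg)
        as [d [Hd dK]].
      destruct (is_derive_slope_ge g S d eps Hd Heps) as [del [Hdel [Hright _]]].
      set (y := Rmin (S + del / 2) t).
      assert (Hy : S < y <= S + del / 2 /\ y <= t) by (unfold y, Rmin; destruct Rle_dec; lra).
      exists y. split; [lra|].
      specialize (Hright y ltac:(lra)).
      assert ((d - eps) * (y - S) >= (-K - eps) * (y - S)) by nra. nra.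
    + destruct (g_cont S HS (ball (g S) (mkposreal eps Heps)) (locally_ball _ _))
        as [del Hdel].
      pose proof (cond_pos del).
      set (y := Rmin (S + del / 2) t).
      assert (Hy : S < y <= S + del / 2 /\ y <= t) by (unfold y, Rmin; destruct Rle_dec; lra).
      exists y. split; [lra|].
      specialize (Hdel y ltac:(change (Rabs (y - S) < del); rewrite Rabs_right; lra) ltac:(lra)).
      change (Rabs (g y - g S) < eps) in Hdel.
      revert Hdel. unfold Rabs. destruct Rcase_abs; intros; nra.
Qed.

Lemma even_decr_le (g : R -> R) (a b : R) :
  even_fun g -> decr_Rplus g -> Rabs a <= Rabs b -> g b <= g a.
Proof.
  intros g_even g_decr Hab.
  assert (g_abs : forall z, g z = g (Rabs z)).
  { intros z. unfold Rabs. destruct Rcase_abs; [rewrite g_even|]; reflexivity. }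
  rewrite (g_abs a), (g_abs b). apply g_decr; [apply Rabs_pos | exact Hab].
Qed.

Lemma solution_time_continuous (k f u0 : R -> R) (u : R -> R -> R) :
  is_solution k f u0 u -> forall x S, 0 <= S ->
  filterlim (fun s => u s x) (within (fun s => 0 <= s) (locally S)) (locally (u S x)).
Proof.
  intros (_ & _ & u_right0 & u_der) x S HS P HP.
  destruct (Req_dec S 0) as [-> | S0].
  - destruct (u_right0 x P HP) as [del Hdel].
    exists del. intros y Hy y_ge0.
    destruct (Req_dec y 0) as [-> | y0]; [exact (locally_singleton _ _ HP)|].
    apply Hdel; [exact Hy | lra].
  - destruct (u_der S x ltac:(lra)) as [I [_ HI]].
    destruct (ex_derive_continuous (fun s => u s x) S (ex_intro _ _ HI) P HP)
      as [del Hdel].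
    exists del. intros y Hy _. exact (Hdel y Hy).
Qed.

Section Reflection.

Variables (k f u0 : R -> R) (u : R -> R -> R) (c K : R) (D : R -> Prop).
Hypotheses (k_even : even_fun k) (k_decr : decr_Rplus k)
  (k_nonneg : forall x, 0 <= k x) (k_int1 : is_int_R k 1)
  (u_sol : is_solution k f u0 u) (K_ge0 : 0 <= K)
  (f_lip : forall a b, I01 a -> I01 b -> Rabs (f b - f a) <= K * Rabs (b - a))
  (D_covers : forall y, D y \/ D (2*c - y))
  (D_same_side : forall x y, D x -> D y -> (x <= c /\ y <= c) \/ (c <= x /\ c <= y)).

Let w s x := u s x - u s (2*c - x).

Lemma kernel_same_side_le (x y : R) : D x -> D y -> k (2*c - x - y) <= k (x - y).
Proof.
  intros Dx Dy. apply even_decr_le; [exact k_even | exact k_decr|].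
  destruct (D_same_side x y Dx Dy); unfold Rabs; repeat destruct Rcase_abs; lra.
Qed.

Lemma w_reflect (s y : R) : w s (2*c - y) = - w s y.
Proof. unfold w. replace (2*c - (2*c - y)) with y by ring. ring. Qed.

Lemma w_bounded (s y : R) : 0 <= s -> -1 <= w s y <= 1.
Proof.
  intros Hs. destruct u_sol as [u_I01 _].
  pose proof (u_I01 s y Hs). pose proof (u_I01 s (2*c - y) Hs).
  unfold w, I01 in *. lra.
Qed.

Lemma kernel_weighted_w_ge (s x M : R) :
  D x -> 0 <= M -> (forall z, D z -> -M <= w s z) ->
  forall y, -(k (x - y) + k ((2*c - x) - y)) * M <=
            (k (x - y) - k ((2*c - x) - y)) * w s y.
Proof.
  intros Dx M_ge0 Hw y.
  pose proof (k_nonneg (x - y)). pose proof (k_nonneg ((2*c - x) - y)).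
  destruct (D_covers y) as [Dy | Dy'].
  - pose proof (kernel_same_side_le x y Dx Dy). pose proof (Hw y Dy).
    replace (2*c - x - y) with ((2*c - x) - y) in * by ring. nra.
  - pose proof (kernel_same_side_le x (2*c - y) Dx Dy') as Hk.
    pose proof (Hw _ Dy') as Hwy. rewrite w_reflect in Hwy.
    replace (2*c - x - (2*c - y)) with (-(x - y)) in Hk by ring.
    replace (x - (2*c - y)) with (-((2*c - x) - y)) in Hk by ring.
    rewrite !k_even in Hk. nra.
Qed.

Lemma w_derive_ge (s x M : R) :
  0 < s -> D x -> 0 <= M -> (forall z, D z -> -M <= w s z) -> w s x < 0 ->
  exists d, is_derive (fun r => w r x) s d /\ -((1 + K) * M) <= d.
Proof.
  intros Hs Dx M_ge0 Hw Hneg.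
  destruct u_sol as [u_I01 [_ [_ u_der]]].
  destruct (u_der s x Hs) as [I1 [HI1 Hd1]].
  destruct (u_der s (2*c - x) Hs) as [I2 [HI2 Hd2]].
  exists ((I1 - u s x + f (u s x)) - (I2 - u s (2*c - x) + f (u s (2*c - x)))).
  split; [exact (is_derive_minus _ _ s _ _ Hd1 Hd2)|].
  assert (Hconv : -M <= I1 - I2).
  { exact (convolution_reflection_gap k (u s) c x M I1 I2 k_even k_int1 HI1 HI2
             (kernel_weighted_w_ge s x M Dx M_ge0 Hw)). }
  assert (Hf : Rabs (f (u s x) - f (u s (2*c - x))) <= K * - w s x).
  { rewrite <- (Rabs_left (w s x)) by exact Hneg.
    unfold w. apply f_lip; apply u_I01; lra. }
  pose proof (Hw x Dx).
  assert (K * - w s x <= K * M) by (apply Rmult_le_compat_l; lra).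
  unfold w in *. revert Hf. unfold Rabs. destruct Rcase_abs; intros; nra.
Qed.

Lemma w_continuous (x S : R) : 0 <= S ->
  filterlim (fun s => w s x) (within (fun s => 0 <= s) (locally S)) (locally (w S x)).
Proof.
  intros HS.
  apply (filterlim_comp_2 (G := locally (u S x)) (H := locally (opp (u S (2*c - x))))
           (fun s => u s x) (fun s => opp (u s (2*c - x))) plus).
  - exact (solution_time_continuous k f u0 u u_sol x S HS).
  - eapply filterlim_comp; [exact (solution_time_continuous k f u0 u u_sol (2*c - x) S HS)|].
    exact (filterlim_opp (V := R_NormedModule) _).
  - exact (filterlim_plus (V := R_NormedModule) _ _).
Qed.

(* N is the largest negative part of w on the window; the derivative bound
   of [w_derive_ge] gives w >= -(1 + K) N h = - N / 2 there, so N <= N / 2. *)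
Lemma w_nonneg_window (tau : R) : 0 <= tau -> (forall x, D x -> 0 <= w tau x) ->
  forall t x, tau <= t <= tau + / (2 * (1 + K)) -> D x -> 0 <= w t x.
Proof.
  intros tau_ge0 w_tau.
  set (h := / (2 * (1 + K))).
  assert (h_pos : 0 < h) by (unfold h; apply Rinv_0_lt_compat; lra).
  set (E := fun r => r = 0 \/ exists s y, tau <= s <= tau + h /\ D y /\ r = - w s y).
  assert (E_bound : bound E).
  { exists 1. intros r [-> | (s & y & Hs & _ & ->)]; [lra|].
    pose proof (w_bounded s y ltac:(lra)). lra. }
  destruct (completeness E E_bound (ex_intro _ 0 (or_introl eq_refl))) as [N [N_ub N_lub]].
  assert (N_ge0 : 0 <= N) by (apply N_ub; left; reflexivity).
  assert (w_ge_N : forall s y, tau <= s <= tau + h -> D y -> -N <= w s y).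
  { intros s y Hs Dy. assert (- w s y <= N) by (apply N_ub; right; exists s, y; auto). lra. }
  assert (w_ge_halfN : forall t x, tau <= t <= tau + h -> D x -> - (N / 2) <= w t x).
  { intros t x Ht Dx.
    assert (-((1 + K) * N) * (t - tau) <= w t x).
    { apply (linear_lower_bound_where_negative (fun r => w r x)); try lra.
      - apply Rmult_le_pos; lra.
      - exact (w_tau x Dx).
      - intros S HS P HP.
        destruct (w_continuous x S ltac:(lra) P HP) as [del Hdel].
        exists del. intros y Hy Hy_tau. apply Hdel; [exact Hy | lra].
      - intros S HS Hneg. apply w_derive_ge; auto; [lra|].
        intros z Dz. apply w_ge_N; auto; lra. }
    assert ((1 + K) * N * (t - tau) <= (1 + K) * N * h)
      by (apply Rmult_le_compat_l; [apply Rmult_le_pos|]; lra).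
    assert ((1 + K) * N * h = N / 2) by (unfold h; field; lra).
    lra. }
  assert (N <= N / 2).
  { apply N_lub. intros r [-> | (s & y & Hs & Dy & ->)]; [lra|].
    pose proof (w_ge_halfN s y Hs Dy). lra. }
  intros t x Ht Dx. pose proof (w_ge_N t x Ht Dx). lra.
Qed.

Lemma reflection_comparison :
  (forall x, D x -> u 0 (2*c - x) <= u 0 x) ->
  forall t x, 0 <= t -> D x -> u t (2*c - x) <= u t x.
Proof.
  intros u_init_ordered.
  set (h := / (2 * (1 + K))).
  assert (h_pos : 0 < h) by (unfold h; apply Rinv_0_lt_compat; lra).
  assert (w_ge0_upto : forall n t x, 0 <= t <= INR n * h -> D x -> 0 <= w t x).
  { induction n as [|n IH]; intros t x Ht Dx.
    - simpl in Ht. replace t with 0 by lra.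
      pose proof (u_init_ordered x Dx). unfold w. lra.
    - rewrite S_INR in Ht. pose proof (pos_INR n).
      destruct (Rle_dec t (INR n * h)); [apply IH; auto; lra|].
      apply (w_nonneg_window (INR n * h)); auto.
      + apply Rmult_le_pos; lra.
      + intros y Dy. apply IH; auto. split; [apply Rmult_le_pos|]; lra.
      + fold h. lra. }
  intros t x Ht Dx.
  destruct (INR_archimed h t h_pos) as [n Hn].
  pose proof (w_ge0_upto n t x ltac:(lra) Dx). unfold w in *. lra.
Qed.

End Reflection.

Lemma solution_reflection_le (k f df u0 : R -> R) (u : R -> R -> R) (x1 c : R)
  (D : R -> Prop) :
  even_fun k -> decr_Rplus k -> (forall x, 0 <= k x) -> is_int_R k 1 ->
  C1_01 f df -> is_solution k f u0 u ->
  even_fun (fun y => u0 (y + x1)) -> decr_Rplus (fun y => u0 (y + x1)) ->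
  (forall y, D y \/ D (2*c - y)) ->
  (forall x y, D x -> D y -> (x <= c /\ y <= c) \/ (c <= x /\ c <= y)) ->
  (forall x, D x -> Rabs (x - x1) <= Rabs (2*c - x - x1)) ->
  forall t x, 0 <= t -> D x -> u t (2*c - x) <= u t x.
Proof.
  intros k_even k_decr k_nonneg k_int1 f_C1 u_sol u0_even u0_decr
    D_covers D_same_side D_closer.
  destruct (C1_01_lipschitz f df f_C1) as [K [K_ge0 f_lip]].
  apply (reflection_comparison k f u0 u c K D k_even k_decr k_nonneg k_int1 u_sol
           K_ge0 f_lip D_covers D_same_side).
  intros x Dx. destruct u_sol as (_ & u_init & _). rewrite !u_init.
  pose proof (even_decr_le _ _ _ u0_even u0_decr (D_closer x Dx)) as Hu0.
  simpl in Hu0. now rewrite !Rplus_comm with (r2 := x1), !Rplus_minus in Hu0.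
Qed.

Theorem theorem2p5
  (k f df u0 : R -> R) (u : R -> R -> R) (x1 : R)
  (* kernel *)
  (k_cont : forall x, continuous k x)
  (k_nonneg : forall x, 0 <= k x)
  (k_int1 : is_int_R k 1)
  (K1 : exists lam, 0 < lam /\
          ex_RInt_gen (fun x => k x * exp (lam * Rabs x))
            (Rbar_locally m_infty) (Rbar_locally p_infty))
  (K2 : exists a b, 0 < a /\ b < 0 /\ 0 < k a /\ 0 < k b)
  (* nonlinearity *)
  (f_C1 : C1_01 f df)
  (f0 : f 0 = 0) (f1 : f 1 = 0)
  (f_pos : forall s, 0 < s < 1 -> 0 < f s)
  (df0_pos : 0 < df 0)
  (f_KPP : forall s, 0 < s < 1 -> f s <= df 0 * s)
  (* initial datum *)
  (u0_cont : forall x, continuous u0 x)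
  (u0_bnd : forall x, 0 <= u0 x <= 1)
  (* solution *)
  (u_sol : is_solution k f u0 u)
  (* symmetry hypotheses *)
  (k_even : even_fun k) (k_decr : decr_Rplus k)
  (u0_even : even_fun (fun y => u0 (y + x1)))
  (u0_decr : decr_Rplus (fun y => u0 (y + x1))) :
  forall t, 0 < t ->
    even_fun (fun y => u t (y + x1)) /\ decr_Rplus (fun y => u t (y + x1)).
Proof.
  intros t Ht.
  pose proof (fun c D => solution_reflection_le k f df u0 u x1 c D k_even k_decr
                k_nonneg k_int1 f_C1 u_sol u0_even u0_decr) as compare.
  assert (mirror : forall z, u t (2*x1 - z) <= u t z).
  { intros z. destruct (Rle_dec z x1).
    - apply (compare x1 (fun x => x <= x1)); intros; try lra.
      unfold Rabs; repeat destruct Rcase_abs; lra.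
    - apply (compare x1 (fun x => x1 <= x)); intros; try lra.
      unfold Rabs; repeat destruct Rcase_abs; lra. }
  split.
  - intros y. replace (- y + x1) with (2*x1 - (y + x1)) by ring.
    pose proof (mirror (y + x1)). pose proof (mirror (2*x1 - (y + x1))).
    replace (2*x1 - (2*x1 - (y + x1))) with (y + x1) in * by ring. lra.
  - intros p q Hp Hpq.
    replace (q + x1) with (2*(x1 + (p + q)/2) - (p + x1)) by field.
    apply (compare (x1 + (p + q)/2) (fun x => x <= x1 + (p + q)/2)); intros; try lra.
    unfold Rabs; repeat destruct Rcase_abs; lra.
Qed.
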